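(* A snake graph $\mathcal{G}$ is palindromic of even length if and only if it has a rotational symmetry at its center tile.
   Context: A tile is a unit square in the plane with sides parallel to the coordinate axes, viewed as a graph with 4 vertices and 4 edges. A snake graph with $d\ge 1$ tiles is a planar graph which is the union of tiles $G_1,\dots,G_d$ such that for each $i$, $G_{i+1}$ is the translate of $G_i$ by $(0,1)$ or by $(1,0)$; thus $G_i$ and $G_{i+1}$ share exactly one edge $e_i$ (the north edge of $G_i$, or its east edge). Snake graphs are considered up to translation. A sign function on a snake graph is a map $f$ from its set of edges to $\{+,-\}$ such that in every tile the north and west edges have the same sign, the south and east edges have the same sign, and the north and south edges have opposite signs. For a sequence $(a_1,\dots,a_n)$ of positive integers with $d=a_1+\cdots+a_n-1\ge 1$, the snake graph $\mathcal{G}[a_1,\dots,a_n]$ is the unique snake graph with tiles $G_1,\dots,G_d$ for which there exist a sign function $f$ and an edge $e_d\in\{\text{north edge of }G_d,\ \text{east edge of }G_d\}$ such that, with $e_0$ the south edge of $G_1$ and $e_i$ ($1\le i\le d-1$) the edge shared by $G_i$ and $G_{i+1}$, the sequence $(f(e_0),f(e_1),\dots,f(e_d))$ consists of $a_1$ copies of a sign $s$, followed by $a_2$ copies of $-s$, then $a_3$ copies of $s$, and so on alternately. A snake graph $\mathcal{G}$ is called palindromic of even length if $\mathcal{G}=\mathcal{G}[a_1,\dots,a_n]$ for some sequence of positive integers with $n$ even and $(a_1,\dots,a_n)=(a_n,\dots,a_1)$. A snake graph has a rotational symmetry at its center tile if it has a tile $G_i$ such that the rotation by $180^\circ$ about the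 center of $G_i$ maps the graph onto itself. *)

From Stdlib Require Import ZArith List Arith Lia.
Import ListNotations.
Open Scope Z_scope.

Definition point := (Z * Z)%type.
Definition seg := (point * point)%type.

(* A tile is identified by its south-west corner (x,y): the unit square
   [x,x+1] x [y,y+1]. Its four sides, each written with the smaller
   (lexicographically) endpoint first, so that a side shared by two tiles
   gets the same representation. *)
Definition south (t : point) : seg := ((fst t, snd t), (fst t + 1, snd t)).
Definition north (t : point) : seg := ((fst t, snd t + 1), (fst t + 1, snd t + 1)).
Definition west  (t : point) : seg := ((fst t, snd t), (fst t, snd t + 1)).
Definition east  (t : point) : seg := ((fst t + 1, snd t), (fst t + 1, snd t + 1)).

Definition corners (t : point) : list point :=
  [(fst t, snd t); (fst t + 1, snd t); (fst t, snd t + 1); (fst t + 1, snd t + 1)].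
Definition sides (t : point) : list seg := [south t; north t; west t; east t].

(* A snake graph with d >= 1 tiles, up to translation, is encoded by the list
   ds of its d-1 steps: true = G_{i+1} is G_i translated by (0,1) (north),
   false = translated by (1,0) (east). Tile G_{i+1} (0-indexed: tile i) has
   south-west corner tile_pos ds i, with G_1 placed at the origin. *)
Fixpoint tile_pos (ds : list bool) (i : nat) : point :=
  match i with
  | O => (0, 0)
  | S k => let p := tile_pos ds k in
           if nth k ds false then (fst p, snd p + 1) else (fst p + 1, snd p)
  end.

Definition ntiles (ds : list bool) : nat := S (length ds).

Definition snake_vertex (ds : list bool) (p : point) : Prop :=
  exists i, (i < ntiles ds)%nat /\ In p (corners (tile_pos ds i)).

Definition snake_edge (ds : list bool) (p q : point) : Prop :=
  exists i, (i < ntiles ds)%nat /\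
    exists s, In s (sides (tile_pos ds i)) /\ (s = (p, q) \/ s = (q, p)).

(* Rotation by 180 degrees about the center (x+1/2, y+1/2) of tile t. *)
Definition rot180 (t : point) (p : point) : point :=
  (2 * fst t + 1 - fst p, 2 * snd t + 1 - snd p).

Definition rot_sym_center (ds : list bool) : Prop :=
  exists i, (i < ntiles ds)%nat /\
    let t := tile_pos ds i in
    (forall p, snake_vertex ds p <-> snake_vertex ds (rot180 t p)) /\
    (forall p q, snake_edge ds p q <-> snake_edge ds (rot180 t p) (rot180 t q)).

(* Sign function (signs + / - encoded as booleans). It is given as a function
   on all unit segments; only its values on the edges of the graph matter. *)
Definition sign_function (ds : list bool) (f : seg -> bool) : Prop :=
  forall i, (i < ntiles ds)%nat ->
    let t := tile_pos ds i in
    f (north t) = f (west t) /\ f (south t) = f (east t) /\ f (north t) <> f (south t).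

(* e_0 = south edge of G_1; e_i (1 <= i <= d-1) = edge shared by G_i, G_{i+1}. *)
Definition shared_edge (ds : list bool) (k : nat) : seg :=
  if nth k ds false then north (tile_pos ds k) else east (tile_pos ds k).

Definition inner_edges (ds : list bool) : list seg :=
  south (tile_pos ds 0) :: map (shared_edge ds) (seq 0 (length ds)).

Fixpoint blocks (s : bool) (a : list nat) : list bool :=
  match a with
  | [] => []
  | x :: a' => repeat s x ++ blocks (negb s) a'
  end.

(* snake_of a ds : the snake graph ds is G[a_1,...,a_n]
   (d = a_1 + ... + a_n - 1 >= 1 tiles, and the defining sign condition). *)
Definition snake_of (a : list nat) (ds : list bool) : Prop :=
  ntiles ds = (list_sum a - 1)%nat /\
  exists (f : seg -> bool) (ed : seg) (s : bool),
    sign_function ds f /\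
    (ed = north (tile_pos ds (length ds)) \/ ed = east (tile_pos ds (length ds))) /\
    map f (inner_edges ds) ++ [f ed] = blocks s a.

Definition palindromic_even (ds : list bool) : Prop :=
  exists a : list nat,
    Forall (fun x => (0 < x)%nat) a /\ Nat.Even (length a) /\
    a = rev a /\ snake_of a ds.

From Stdlib Require Import ZArith List Arith Lia Bool.
Import ListNotations.
Local Open Scope nat_scope.

(* Take e_d to be the north edge of the last tile and let h_j be the bit "e_j is horizontal".
   Within a tile, the sign function changes from the entry edge to the exit edge exactly when
   the two are parallel, so f(e_j) = c xor h_j xor (j odd).  A word [blocks s a] with positive
   [a] is antipalindromic (its reversal is its negation) iff [a] is a palindrome of even
   length, and by the formula the sign word is antipalindromic iff d + 1 is even and h is a
   palindrome, i.e. iff the step word [ds] is a palindrome of even length.  Geometrically, a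
   rotation about the center of a tile that preserves the vertices must swap the extreme
   antidiagonals x + y = 0 and x + y = d + 1, which forces the tile to be the middle one, and
   then the rotation reverses the sequence of steps; conversely a palindromic step word of
   even length makes the tiles symmetric about the middle tile. *)

Lemma rev_eq_map_iff {A : Type} (g : A -> A) (l : list A) (d : A) :
  rev l = map g l <-> forall k, k < length l -> nth (length l - S k) l d = g (nth k l d).
Proof.
  split.
  - intros E k Hk.
    rewrite <- rev_nth, E, (nth_indep _ d (g d)) by (rewrite ?length_map; exact Hk).
    apply map_nth.
  - intros H. apply nth_ext with d (g d); [now rewrite length_rev, length_map|].
    intros k Hk. rewrite length_rev in Hk.
    rewrite rev_nth, map_nth by exact Hk. exact (H k Hk).
Qed.

Lemma rev_eq_nth {A : Type} (l : list A) (d : A) :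
  rev l = l <-> forall k, k < length l -> nth (length l - S k) l d = nth k l d.
Proof.
  rewrite <- (rev_eq_map_iff (fun x => x)), map_id. reflexivity.
Qed.

Lemma odd_sub_succ_even n k : Nat.Even n -> k < n -> Nat.odd (n - S k) = negb (Nat.odd k).
Proof.
  intros He Hk.
  rewrite Nat.odd_sub, Nat.odd_succ, <- Nat.negb_odd by lia.
  apply Nat.even_spec in He. rewrite <- Nat.negb_even, He. reflexivity.
Qed.

Lemma blocks_length s a : length (blocks s a) = list_sum a.
Proof.
  revert s; induction a as [|x a IH]; intros s; [reflexivity|].
  simpl. rewrite length_app, repeat_length, IH. reflexivity.
Qed.

Lemma map_negb_blocks s a : map negb (blocks s a) = blocks (negb s) a.
Proof.
  revert s; induction a as [|x a IH]; intros s; [reflexivity|].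
  simpl. rewrite map_app, IH, map_repeat. reflexivity.
Qed.

Lemma blocks_app s a b :
  blocks s (a ++ b) = blocks s a ++ blocks (xorb s (Nat.odd (length a))) b.
Proof.
  revert s; induction a as [|x a IH]; intros s; simpl.
  - rewrite xorb_false_r. reflexivity.
  - rewrite IH, app_assoc, Nat.odd_succ, <- Nat.negb_odd.
    destruct s, (Nat.odd (length a)); reflexivity.
Qed.

Lemma rev_blocks s a : rev (blocks s a) = blocks (xorb s (Nat.even (length a))) (rev a).
Proof.
  revert s; induction a as [|x a IH]; intros s; [reflexivity|].
  cbn [blocks rev length]. rewrite rev_app_distr, IH, rev_repeat, blocks_app, length_rev.
  cbn [blocks]. rewrite app_nil_r, Nat.even_succ, <- Nat.negb_odd.
  destruct s, (Nat.odd (length a)); reflexivity.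
Qed.

Lemma hd_error_blocks s a : Forall (fun x => 0 < x) a ->
  hd_error (blocks s a) = match a with [] => None | _ :: _ => Some s end.
Proof.
  intros [|x a' Hx _]; [reflexivity|].
  destruct x as [|x]; [lia|]. reflexivity.
Qed.

Lemma repeat_app_inj {A : Type} (s : A) x x' l l' :
  hd_error l <> Some s -> hd_error l' <> Some s ->
  repeat s x ++ l = repeat s x' ++ l' -> x = x' /\ l = l'.
Proof.
  intros Hl Hl'. revert x'; induction x as [|x IH]; intros [|x'] E; simpl in E.
  - auto.
  - subst l. contradiction.
  - subst l'. contradiction.
  - injection E as E. destruct (IH x' E). auto.
Qed.

Lemma blocks_inj s s' a a' :
  Forall (fun x => 0 < x) a -> Forall (fun x => 0 < x) a' ->
  blocks s a = blocks s' a' -> a = a' /\ (a = [] \/ s = s').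
Proof.
  revert s s' a'; induction a as [|x a IH]; intros s s' a' Ha Ha' E.
  - destruct Ha' as [|x' a' Hx' _]; [auto|].
    destruct x' as [|x']; [lia | discriminate].
  - inversion Ha as [|? ? Hx Hpos]; subst.
    destruct Ha' as [|x' a' Hx' Hpos']; [destruct x as [|x]; [lia | discriminate]|].
    assert (s' = s) as ->.
    { destruct x as [|x], x' as [|x']; try lia. now injection E. }
    simpl in E. apply repeat_app_inj in E as [-> E];
      [| rewrite hd_error_blocks by assumption; destruct a; [|destruct s]; discriminate
       | rewrite hd_error_blocks by assumption; destruct a'; [|destruct s]; discriminate].
    destruct (IH _ _ _ Hpos Hpos' E) as [-> _]. auto.
Qed.

Lemma blocks_surj (w : list bool) : exists s a, Forall (fun x => 0 < x) a /\ blocks s a = w.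
Proof.
  induction w as [|y w (s & a & Ha & E)]; [exists true, []; auto|].
  destruct a as [|x a].
  - subst w. exists y, [1]. auto.
  - inversion Ha; subst. destruct (bool_dec s y) as [-> | Hsy].
    + exists y, (S x :: a). auto.
    + exists y, (1 :: x :: a). split; [auto|].
      replace s with (negb y) by (destruct s, y; cbn; congruence). reflexivity.
Qed.

Lemma antipalindromic_blocks s a : Forall (fun x => 0 < x) a ->
  rev (blocks s a) = map negb (blocks s a) <-> Nat.Even (length a) /\ rev a = a.
Proof.
  intros Ha. rewrite rev_blocks, map_negb_blocks. split.
  - intros E. apply blocks_inj in E as [Er [Enil | Es]]; [| |apply Forall_rev|]; try assumption.
    + rewrite Er in Enil. subst a. split; [exists 0|]; reflexivity.
    + split; [|exact Er]. apply Nat.even_spec.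
      destruct s, (Nat.even (length a)); simpl in Es; congruence.
  - intros [He Er]. apply Nat.even_spec in He. rewrite He, Er, xorb_true_r. reflexivity.
Qed.

Lemma antipalindromic_parity_word (w B : list bool) (c : bool) :
  length w = length B ->
  (forall j, j < length w -> nth j w false = xorb c (xorb (nth j B false) (Nat.odd j))) ->
  rev w = map negb w <-> Nat.Even (length w) /\ rev B = B.
Proof.
  intros Hlen Hw. rewrite (rev_eq_map_iff _ _ false), (rev_eq_nth _ false), <- Hlen.
  split.
  - intros H.
    assert (He : Nat.Even (length w)).
    { destruct (Nat.Even_or_Odd (length w)) as [He | [h Hh]]; [exact He | exfalso].
      specialize (H h ltac:(lia)). replace (length w - S h) with h in H by lia.
      destruct (nth h w false); discriminate. }
    split; [exact He|]. intros k Hk. specialize (H k Hk).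
    rewrite !Hw, odd_sub_succ_even in H by (assumption || lia).
    destruct c, (nth (length w - S k) B false), (nth k B false), (Nat.odd k); cbn in *; congruence.
  - intros [He HB] k Hk.
    rewrite !Hw, odd_sub_succ_even, HB by (assumption || lia).
    destruct c, (nth k B false), (Nat.odd k); reflexivity.
Qed.

Definition edge_seq (ds : list bool) (ed : seg) : list seg := inner_edges ds ++ [ed].

Definition last_edge (ds : list bool) (b : bool) : seg :=
  if b then north (tile_pos ds (length ds)) else east (tile_pos ds (length ds)).

(* [true] marks a horizontal edge: e_0 is a south edge, e_(k+1) is a north edge iff step k
   goes north, and the last edge is north iff [b]. *)
Definition horizontal_flags (ds : list bool) (b : bool) : list bool := true :: ds ++ [b].

Lemma length_edge_seq ds ed : length (edge_seq ds ed) = length ds + 2.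
Proof.
  unfold edge_seq, inner_edges. rewrite length_app. cbn [length].
  rewrite length_map, length_seq. lia.
Qed.

Lemma length_horizontal_flags ds b : length (horizontal_flags ds b) = length ds + 2.
Proof. unfold horizontal_flags. cbn [length]. rewrite length_app. cbn [length]. lia. Qed.

Lemma nth_edge_seq_entry ds b j : j <= length ds ->
  nth j (edge_seq ds (last_edge ds b)) (last_edge ds b)
  = if nth j (horizontal_flags ds b) false then south (tile_pos ds j) else west (tile_pos ds j).
Proof.
  intros Hj. destruct j as [|k]; [reflexivity|].
  unfold edge_seq, inner_edges, horizontal_flags. cbn [nth app].
  rewrite !app_nth1, (nth_indep _ _ (shared_edge ds 0)), map_nth, seq_nth
    by (rewrite ?length_map, ?length_seq; lia).
  rewrite Nat.add_0_l. unfold shared_edge. cbn [tile_pos].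
  destruct (nth k ds false), (tile_pos ds k); reflexivity.
Qed.

Lemma nth_edge_seq_exit ds b j : j <= length ds ->
  nth (S j) (edge_seq ds (last_edge ds b)) (last_edge ds b)
  = if nth (S j) (horizontal_flags ds b) false then north (tile_pos ds j) else east (tile_pos ds j).
Proof.
  intros Hj. unfold edge_seq, inner_edges, horizontal_flags. cbn [nth app].
  destruct (Nat.lt_ge_cases j (length ds)) as [Hlt | Hge].
  - rewrite !app_nth1, (nth_indep _ _ (shared_edge ds 0)), map_nth, seq_nth
      by (rewrite ?length_map, ?length_seq; lia).
    reflexivity.
  - replace j with (length ds) by lia.
    rewrite !app_nth2 by (rewrite ?length_map, ?length_seq; lia).
    rewrite length_map, length_seq, Nat.sub_diag. reflexivity.
Qed.

(* The entry edge (south or west) is horizontal iff [b], the exit edge (north or east) iff [b']. *)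
Lemma sign_across_tile (f : seg -> bool) (t : point) (b b' : bool) :
  f (north t) = f (west t) -> f (south t) = f (east t) -> f (north t) <> f (south t) ->
  f (if b' then north t else east t) = xorb (f (if b then south t else west t)) (negb (xorb b b')).
Proof.
  intros Hnw Hse Hns.
  destruct b, b'; cbn; rewrite <- ?Hnw, <- ?Hse;
    destruct (f (north t)), (f (south t)); cbn; congruence.
Qed.

Lemma sign_word_parity ds f b : sign_function ds f ->
  exists c, forall j, j < length ds + 2 ->
    nth j (map f (edge_seq ds (last_edge ds b))) false
    = xorb c (xorb (nth j (horizontal_flags ds b) false) (Nat.odd j)).
Proof.
  intros Hf. set (E := edge_seq ds (last_edge ds b)).
  assert (HW : forall j, j < length ds + 2 -> nth j (map f E) false = f (nth j E (last_edge ds b))).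
  { intros j Hj. rewrite (nth_indep _ _ (f (last_edge ds b))), map_nth; [reflexivity|].
    unfold E. rewrite length_map, length_edge_seq. exact Hj. }
  exists (negb (f (nth 0 E (last_edge ds b)))).
  intros j Hj. rewrite HW by exact Hj.
  induction j as [|j IH].
  - destruct (f _); reflexivity.
  - destruct (Hf j ltac:(unfold ntiles; lia)) as (Hnw & Hse & Hns).
    unfold E. rewrite nth_edge_seq_exit by lia.
    rewrite (sign_across_tile f _ (nth j (horizontal_flags ds b) false)) by assumption.
    rewrite <- nth_edge_seq_entry by lia. fold E. rewrite IH by lia.
    rewrite Nat.odd_succ, <- Nat.negb_odd.
    destruct (negb _), (nth j (horizontal_flags ds b) false),
      (nth (S j) (horizontal_flags ds b) false), (Nat.odd j); reflexivity.
Qed.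

Lemma horizontal_flags_palindrome ds b :
  rev (horizontal_flags ds b) = horizontal_flags ds b <-> b = true /\ rev ds = ds.
Proof.
  unfold horizontal_flags. cbn [rev]. rewrite rev_app_distr. cbn [rev app]. split.
  - intros E. injection E as -> E. apply app_inj_tail in E as [E _]. auto.
  - intros [-> E]. rewrite E. reflexivity.
Qed.

Lemma antipalindromic_sign_word ds f b : sign_function ds f ->
  let w := map f (edge_seq ds (last_edge ds b)) in
  rev w = map negb w <-> Nat.Even (length ds) /\ b = true /\ rev ds = ds.
Proof.
  intros Hf w. destruct (sign_word_parity ds f b Hf) as [c Hc].
  assert (Hlen : length w = length ds + 2)
    by (unfold w; rewrite length_map, length_edge_seq; reflexivity).
  rewrite (antipalindromic_parity_word w (horizontal_flags ds b) c),
    horizontal_flags_palindrome, Hlen.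
  - split; intros [He Hpal]; split; try exact Hpal.
    + apply (Nat.Even_add_Even_inv_l _ 2); [exact He | exists 1; reflexivity].
    + apply Nat.Even_Even_add; [exact He | exists 1; reflexivity].
  - rewrite Hlen, length_horizontal_flags. reflexivity.
  - rewrite Hlen. exact Hc.
Qed.

Definition checkerboard_sign (s : seg) : bool :=
  let '((a, b), (_, d)) := s in
  if Z.eqb b d then Z.even (a + b) else negb (Z.even (a + b)).

Lemma checkerboard_sign_tile t :
  checkerboard_sign (north t) = checkerboard_sign (west t) /\
  checkerboard_sign (south t) = checkerboard_sign (east t) /\
  checkerboard_sign (north t) <> checkerboard_sign (south t).
Proof.
  destruct t as [x y]. unfold checkerboard_sign, north, south, west, east; cbn [fst snd].
  rewrite !Z.eqb_refl, (proj2 (Z.eqb_neq y (y + 1))) by lia.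
  replace (x + (y + 1))%Z with (x + y + 1)%Z by lia.
  replace (x + 1 + y)%Z with (x + y + 1)%Z by lia.
  rewrite Z.even_add. destruct (Z.even (x + y)); cbn; repeat split; congruence.
Qed.

Lemma tile_pos_sum ds j : (fst (tile_pos ds j) + snd (tile_pos ds j))%Z = Z.of_nat j.
Proof.
  induction j as [|j IH]; [reflexivity|].
  cbn [tile_pos]. destruct (nth j ds false); cbn [fst snd]; lia.
Qed.

Lemma tile_pos_mono ds m n : m <= n ->
  (fst (tile_pos ds m) <= fst (tile_pos ds n) /\ snd (tile_pos ds m) <= snd (tile_pos ds n))%Z.
Proof.
  induction 1 as [|n _ IH]; [lia|].
  cbn [tile_pos]. destruct (nth n ds false); cbn [fst snd]; lia.
Qed.

Lemma nth_step_north ds k :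
  nth k ds false = (fst (tile_pos ds (S k)) =? fst (tile_pos ds k))%Z.
Proof.
  cbn [tile_pos]. destruct (nth k ds false); cbn [fst].
  - symmetry. apply Z.eqb_refl.
  - symmetry. apply Z.eqb_neq. lia.
Qed.

Definition in_square (u p : point) : Prop :=
  (fst u <= fst p <= fst u + 1 /\ snd u <= snd p <= snd u + 1)%Z.

Definition unit_apart (p q : point) : Prop :=
  (Z.abs (fst p - fst q) + Z.abs (snd p - snd q) = 1)%Z.

Lemma in_corners u p : In p (corners u) <-> in_square u p.
Proof.
  destruct u as [x y], p as [a b]. unfold in_square, corners. cbn [In fst snd]. split.
  - intros H. repeat destruct H as [H | H]; try contradiction; injection H; lia.
  - intros Hs.
    assert (Ha : a = x \/ a = (x + 1)%Z) by lia.
    assert (Hb : b = y \/ b = (y + 1)%Z) by lia.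
    destruct Ha as [-> | ->], Hb as [-> | ->]; tauto.
Qed.

Lemma in_sides u p q :
  (exists s, In s (sides u) /\ (s = (p, q) \/ s = (q, p))) <->
  in_square u p /\ in_square u q /\ unit_apart p q.
Proof.
  destruct u as [x y], p as [a b], q as [c d].
  unfold in_square, unit_apart, sides, south, north, west, east. cbn [In fst snd]. split.
  - intros (s & Hs & Hpq).
    repeat destruct Hs as [Hs | Hs]; try contradiction; subst s;
      destruct Hpq as [Hpq | Hpq]; injection Hpq; lia.
  - intros (Hp & Hq & Hu).
    assert (Ha : a = x \/ a = (x + 1)%Z) by lia.
    assert (Hb : b = y \/ b = (y + 1)%Z) by lia.
    assert (Hc : c = x \/ c = (x + 1)%Z) by lia.
    assert (Hd : d = y \/ d = (y + 1)%Z) by lia.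
    destruct Ha as [-> | ->], Hb as [-> | ->], Hc as [-> | ->], Hd as [-> | ->];
      try (exfalso; lia);
      solve [ eexists; split; [| left; reflexivity]; tauto
            | eexists; split; [| right; reflexivity]; tauto ].
Qed.

Lemma snake_vertex_iff ds p :
  snake_vertex ds p <-> exists i, i < ntiles ds /\ in_square (tile_pos ds i) p.
Proof.
  unfold snake_vertex. split; intros (i & Hi & Hp); exists i; split; auto; apply in_corners, Hp.
Qed.

Lemma snake_edge_iff ds p q :
  snake_edge ds p q <-> exists i, i < ntiles ds /\
    in_square (tile_pos ds i) p /\ in_square (tile_pos ds i) q /\ unit_apart p q.
Proof.
  unfold snake_edge. split; intros (i & Hi & Hpq); exists i; split; auto; apply in_sides, Hpq.
Qed.

Lemma snake_vertex_sum_bounds ds p : snake_vertex ds p ->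
  (0 <= fst p + snd p <= Z.of_nat (length ds) + 2)%Z.
Proof.
  rewrite snake_vertex_iff. intros (m & Hm & Hp).
  pose proof (tile_pos_sum ds m). unfold ntiles, in_square in *. lia.
Qed.

Lemma snake_vertex_on_diagonal ds j p : j <= length ds -> snake_vertex ds p ->
  (fst p + snd p = Z.of_nat j + 1)%Z ->
  (fst p = fst (tile_pos ds j) \/ fst p = fst (tile_pos ds j) + 1)%Z.
Proof.
  rewrite snake_vertex_iff. intros Hj (m & _ & Hp) Hs.
  pose proof (tile_pos_sum ds m). pose proof (tile_pos_sum ds j).
  unfold in_square in Hp.
  destruct (Nat.le_ge_cases m j) as [Hmj | Hjm];
    [pose proof (tile_pos_mono ds m j Hmj) | pose proof (tile_pos_mono ds j m Hjm)]; lia.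
Qed.

Lemma tile_corner_vertex ds j (dx dy : Z) :
  j < ntiles ds -> (0 <= dx <= 1)%Z -> (0 <= dy <= 1)%Z ->
  snake_vertex ds (fst (tile_pos ds j) + dx, snd (tile_pos ds j) + dy)%Z.
Proof.
  intros Hj Hx Hy. apply snake_vertex_iff. exists j. split; [exact Hj|].
  unfold in_square. cbn [fst snd]. lia.
Qed.

Section VertexSymmetry.

Variables (ds : list bool) (i : nat).

Hypothesis sym : forall p, snake_vertex ds p -> snake_vertex ds (rot180 (tile_pos ds i) p).

(* With L = length ds: the corner (0,0) and the top corner of the last tile, on the
   antidiagonals 0 and L + 2, are sent to the antidiagonals 2i + 2 and 2i - L. *)
Lemma sym_center_length : length ds = 2 * i.
Proof.
  pose proof (tile_pos_sum ds i). pose proof (tile_pos_sum ds (length ds)).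
  assert (Hfirst : 0 < ntiles ds) by (unfold ntiles; lia).
  assert (Hlast : length ds < ntiles ds) by (unfold ntiles; lia).
  pose proof (snake_vertex_sum_bounds ds _
    (sym _ (tile_corner_vertex ds 0 0 0 Hfirst ltac:(lia) ltac:(lia)))).
  pose proof (snake_vertex_sum_bounds ds _
    (sym _ (tile_corner_vertex ds (length ds) 1 1 Hlast ltac:(lia) ltac:(lia)))).
  unfold rot180 in *. cbn [fst snd tile_pos] in *. lia.
Qed.

(* The two vertices on antidiagonal j + 1 are sent to antidiagonal L - j + 1, whose vertices
   have abscissae x_(L-j) and x_(L-j) + 1 (x_k the abscissa of tile k, L = length ds). *)
Lemma sym_tile_mirror_x j : j <= length ds ->
  (fst (tile_pos ds (length ds - j)) = 2 * fst (tile_pos ds i) - fst (tile_pos ds j))%Z.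
Proof.
  intros Hj. pose proof sym_center_length.
  pose proof (tile_pos_sum ds i). pose proof (tile_pos_sum ds j).
  assert (Hn : j < ntiles ds) by (unfold ntiles; lia).
  pose proof (sym _ (tile_corner_vertex ds j 0 1 Hn ltac:(lia) ltac:(lia))) as Hv1.
  pose proof (sym _ (tile_corner_vertex ds j 1 0 Hn ltac:(lia) ltac:(lia))) as Hv2.
  apply snake_vertex_on_diagonal with (j := length ds - j) in Hv1, Hv2;
    unfold rot180 in *; cbn [fst snd] in *; lia.
Qed.

Lemma sym_palindrome : rev ds = ds.
Proof.
  apply (rev_eq_nth ds false). intros k Hk.
  rewrite !nth_step_north.
  replace (S (length ds - S k)) with (length ds - k) by lia.
  rewrite !sym_tile_mirror_x by lia.
  destruct (Z.eqb_spec (fst (tile_pos ds (S k))) (fst (tile_pos ds k)));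
    [apply Z.eqb_eq | apply Z.eqb_neq]; lia.
Qed.

End VertexSymmetry.

Definition mirror (t u : point) : point := (2 * fst t - fst u, 2 * snd t - snd u)%Z.

Lemma rot180_involutive t p : rot180 t (rot180 t p) = p.
Proof. destruct p as [x y]. unfold rot180. cbn [fst snd]. f_equal; lia. Qed.

Lemma in_square_rot180 t u p : in_square (mirror t u) (rot180 t p) <-> in_square u p.
Proof. unfold in_square, mirror, rot180. cbn [fst snd]. lia. Qed.

Lemma unit_apart_rot180 t p q : unit_apart (rot180 t p) (rot180 t q) <-> unit_apart p q.
Proof. unfold unit_apart, rot180. cbn [fst snd]. split; lia. Qed.

Lemma tile_pos_palindrome ds j : rev ds = ds -> j <= length ds ->
  (fst (tile_pos ds (length ds - j)) = fst (tile_pos ds (length ds)) - fst (tile_pos ds j) /\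
   snd (tile_pos ds (length ds - j)) = snd (tile_pos ds (length ds)) - snd (tile_pos ds j))%Z.
Proof.
  intros Hrev. induction j as [|j IH]; intros Hj.
  - rewrite Nat.sub_0_r. cbn [tile_pos fst snd]. lia.
  - specialize (IH ltac:(lia)).
    replace (length ds - j) with (S (length ds - S j)) in IH by lia.
    assert (Hstep : nth (length ds - S j) ds false = nth j ds false).
    { rewrite <- rev_nth, Hrev by lia. reflexivity. }
    cbn [tile_pos] in IH |- *. rewrite Hstep in IH.
    destruct (nth j ds false); cbn [fst snd] in *; lia.
Qed.

Lemma palindrome_rot_sym_center ds : Nat.Even (length ds) -> rev ds = ds -> rot_sym_center ds.
Proof.
  intros [h Hh] Hrev. set (t := tile_pos ds h).
  assert (Hmirror : forall j, j <= length ds ->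
            tile_pos ds (length ds - j) = mirror t (tile_pos ds j)).
  { intros j Hj.
    destruct (tile_pos_palindrome ds j Hrev Hj), (tile_pos_palindrome ds h Hrev ltac:(lia)).
    replace (length ds - h) with h in * by lia.
    rewrite (surjective_pairing (tile_pos ds (length ds - j))). unfold mirror, t. f_equal; lia. }
  assert (Hv : forall p, snake_vertex ds p -> snake_vertex ds (rot180 t p)).
  { intros p. rewrite !snake_vertex_iff. intros (j & Hj & Hp).
    unfold ntiles in Hj. exists (length ds - j). split; [unfold ntiles; lia|].
    rewrite Hmirror by lia. apply in_square_rot180, Hp. }
  assert (He : forall p q, snake_edge ds p q -> snake_edge ds (rot180 t p) (rot180 t q)).
  { intros p q. rewrite !snake_edge_iff. intros (j & Hj & Hp & Hq & Hpq).
    unfold ntiles in Hj. exists (length ds - j). split; [unfold ntiles; lia|].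
    rewrite Hmirror, !in_square_rot180, unit_apart_rot180 by lia. auto. }
  exists h. split; [unfold ntiles; lia|]. fold t. split.
  - intros p. split; [apply Hv|]. intros Hp. rewrite <- (rot180_involutive t p). apply Hv, Hp.
  - intros p q. split; [apply He|]. intros Hpq.
    rewrite <- (rot180_involutive t p), <- (rot180_involutive t q). apply He, Hpq.
Qed.

Lemma rot_sym_center_iff ds : rot_sym_center ds <-> Nat.Even (length ds) /\ rev ds = ds.
Proof.
  split.
  - intros (i & _ & Hv & _). split.
    + exists i. apply (sym_center_length ds i), Hv.
    + apply (sym_palindrome ds i), Hv.
  - intros [He Hrev]. apply palindrome_rot_sym_center; assumption.
Qed.

Theorem theorem3p7 (ds : list bool) :
  palindromic_even ds <-> rot_sym_center ds.
Proof.
  rewrite rot_sym_center_iff. split.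
  - intros (a & Hpos & Heven & Hpal & _ & f & ed & s & Hf & Hed & Hw).
    assert (Hb : exists b, ed = last_edge ds b)
      by (destruct Hed; [exists true | exists false]; assumption).
    destruct Hb as [b ->].
    assert (Hanti : rev (blocks s a) = map negb (blocks s a))
      by (apply antipalindromic_blocks; auto).
    rewrite <- Hw in Hanti.
    change [f (last_edge ds b)] with (map f [last_edge ds b]) in Hanti.
    rewrite <- map_app in Hanti.
    apply antipalindromic_sign_word in Hanti as (HL & _ & Hrev); auto.
  - intros [HL Hrev].
    set (w := map checkerboard_sign (edge_seq ds (last_edge ds true))).
    destruct (blocks_surj w) as (s & a & Hpos & Hw).
    assert (Hanti : rev w = map negb w)
      by (apply antipalindromic_sign_word; [intros i _; apply checkerboard_sign_tile | auto]).
    rewrite <- Hw in Hanti. apply (antipalindromic_blocks s a Hpos) in Hanti as [Heven Hpal].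
    exists a. repeat split; auto.
    + unfold ntiles. rewrite <- (blocks_length s a), Hw. unfold w.
      rewrite length_map, length_edge_seq. lia.
    + exists checkerboard_sign, (last_edge ds true), s.
      split; [intros i _; apply checkerboard_sign_tile|]. split; [left; reflexivity|].
      rewrite Hw. unfold w, edge_seq. rewrite map_app. reflexivity.
Qed.
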